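(* Let $\mathcal H$ be a real Hilbert space and $f\colon\mathcal H\to\left]-\infty,+\infty\right]$ proper, lower semicontinuous, convex, with $\operatorname{int}\operatorname{dom} f\neq\varnothing$, Gâteaux differentiable on $\operatorname{int}\operatorname{dom} f$, and essentially strictly convex. Let $T_1,\dots,T_m\colon\mathcal H\to\mathcal H$ with $\operatorname{int}\operatorname{dom} f\cap\bigcap_{i=1}^m\operatorname{Fix}T_i\neq\varnothing$, and let $\mathcal S(x)=\{x,T_1x,\dots,T_mx\}$. Then $$\operatorname{Fix}\overrightarrow{CC}_{\mathcal S}=\operatorname{int}\operatorname{dom} f\cap\bigcap_{i=1}^m\operatorname{Fix}T_i \quad\text{and}\quad \operatorname{Fix}\overleftarrow{CC}_{\mathcal S}=\operatorname{int}\operatorname{dom} f\cap\bigcap_{i=1}^m\operatorname{Fix}T_i,$$ where for a set-valued map $A$, $\operatorname{Fix}A=\{x: x\in A(x)\}$.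
   Context: Bregman distance: $D_f(x,y)=f(x)-f(y)-\langle\nabla f(y),x-y\rangle$ if $y\in\operatorname{int}\operatorname{dom} f$, $+\infty$ otherwise. Essentially strictly convex: $(\partial f)^{-1}$ is locally bounded on its domain and $f$ is strictly convex on every convex subset of $\operatorname{dom}\partial f$. Forward Bregman circumcenter mapping: for $y\in\mathcal H$ with $\mathcal S(y)\subseteq\operatorname{dom} f$, $\overrightarrow{CC}_{\mathcal S}(y)=\{v\in\operatorname{aff}(\mathcal S(y))\cap\operatorname{int}\operatorname{dom} f: D_f(y,v)=D_f(T_1y,v)=\cdots=D_f(T_my,v)\}$ (empty if $\mathcal S(y)\not\subseteq\operatorname{dom}f$). Backward Bregman circumcenter mapping: for $y\in\mathcal H$ with $\mathcal S(y)\subseteq\operatorname{int}\operatorname{dom} f$, $\overleftarrow{CC}_{\mathcal S}(y)=\{p\in\operatorname{aff}(\mathcal S(y))\cap\operatorname{dom} f: D_f(p,y)=D_f(p,T_1y)=\cdots=D_f(p,T_my)\}$ (empty if $\mathcal S(y)\not\subseteq\operatorname{int}\operatorname{dom} f$). Here $\operatorname{aff}$ denotes affine hull. *)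

From HB Require Import structures.
From mathcomp Require Import all_boot all_order all_algebra.
From mathcomp Require Import all_classical all_reals all_analysis.
Set Implicit Arguments. Unset Strict Implicit. Unset Printing Implicit Defensive.
Import Order.TTheory GRing.Theory Num.Theory.
Import numFieldNormedType.Exports.
Local Open Scope classical_set_scope.
Local Open Scope ring_scope.

Section Defs.
Context {R : realType} {H : normedModType R}.
Implicit Types (ip : H -> H -> R) (f : H -> \bar R).

(* ip is a real inner product inducing the norm of H; together with
   completeness of H this makes H a real Hilbert space. *)
Definition is_inner_product ip :=
  [/\ forall x y, ip x y = ip y x,
      forall a x y z, ip (a *: x + y) z = a * ip x z + ip y z
    & forall x, ip x x = `|x| ^+ 2].

Definition dom f : set H := [set x | (f x < +oo)%E].

Definition proper_fun f := (forall x, f x != -oo%E) /\ (exists x, dom f x).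

(* convexity of an extended-real-valued function (proper, so no -oo) *)
Definition convex_efun f := forall x y (t : R), 0 < t < 1 ->
  (f (t *: x + (1 - t) *: y)%R <= t%:E * f x + (1 - t)%:E * f y)%E.

Definition strictly_convex_on f (C : set H) := forall x y (t : R),
  C x -> C y -> x != y -> 0 < t < 1 ->
  (f (t *: x + (1 - t) *: y)%R < t%:E * f x + (1 - t)%:E * f y)%E.

Definition convex_subset (C : set H) := forall x y (t : R),
  C x -> C y -> 0 <= t <= 1 -> C (t *: x + (1 - t) *: y).

Definition subdiff ip f (x u : H) :=
  f x \is a fin_num /\ forall y, (f x + (ip u (y - x)%R)%:E <= f y)%E.

Definition dom_subdiff ip f : set H := [set x | exists u, subdiff ip f x u].

Definition inv_subdiff_locally_bounded ip f :=
  forall u, (exists x, subdiff ip f x u) ->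
  exists2 e : R, 0 < e & exists M : R, forall v x,
    `|v - u| < e -> subdiff ip f x v -> `|x| <= M.

Definition essentially_strictly_convex ip f :=
  inv_subdiff_locally_bounded ip f /\
  forall C, convex_subset C -> C `<=` dom_subdiff ip f -> strictly_convex_on f C.

Definition gateaux_grad ip f (x g : H) :=
  f x \is a fin_num /\
  forall h, (fun t : R => (fine (f (x + t *: h)%R) - fine (f x)) / t) @ 0^'
              --> ip g h.

(* Bregman distance, with gf the gradient of f on int dom f *)
Definition bregman ip f (gf : H -> H) (x y : H) : \bar R :=
  if pselect ((interior (dom f)) y)
  then (f x - f y - (ip (gf y) (x - y)%R)%:E)%E
  else +oo%E.

Definition aff (A : set H) : set H :=
  [set v | exists n (p : 'I_n -> H) (l : 'I_n -> R),
     [/\ forall i, A (p i), \sum_i l i = 1 & v = \sum_i l i *: p i]].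

Definition Sset m (T : 'I_m -> H -> H) (y : H) : set H :=
  [set z | z = y \/ exists i, z = T i y].

Definition fwdCC ip f gf m (T : 'I_m -> H -> H) (y : H) : set H :=
  [set v | [/\ Sset T y `<=` dom f, aff (Sset T y) v, interior (dom f) v
           & forall i, bregman ip f gf (T i y) v = bregman ip f gf y v]].

Definition bwdCC ip f gf m (T : 'I_m -> H -> H) (y : H) : set H :=
  [set p | [/\ Sset T y `<=` interior (dom f), aff (Sset T y) p, dom f p
           & forall i, bregman ip f gf p (T i y) = bregman ip f gf p y]].

Definition FixS (A : H -> set H) : set H := [set x | A x x].
Definition Fix (T : H -> H) : set H := [set x | T x = x].

End Defs.

From HB Require Import structures.
From mathcomp Require Import all_boot all_order all_algebra.
From mathcomp Require Import all_classical all_reals all_analysis.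
From mathcomp Require Import lra ring.
Import Order.TTheory GRing.Theory Num.Theory.
Import numFieldNormedType.Exports.
Local Open Scope classical_set_scope.
Local Open Scope ring_scope.

(* The inclusion "common fixed points in int dom f are fixed points" is
   immediate: if T_i x = x for all i then S(x) = {x}, x lies in its own affine
   hull and all the Bregman distances in the definition coincide.

   The converse rests on one analytic fact: for a in dom f and b in int dom f,
   D_f(a,b) = 0 forces a = b.  Its proof:
   - a Gateaux gradient of a convex function is a subgradient (gradient
     inequality), so every point of int dom f lies in dom (subdiff f);
   - if D_f(a,b) = 0, the gradient inequality at b together with convexity
     makes f affine along the segment from b towards a;
   - a short initial piece of that segment lies in int dom f, hence in
     dom (subdiff f), so essential strict convexity makes f strictly convex
     there, which is incompatible with affinity unless a = b.
   A fixed point x of either circumcenter map then has D_f(T_i x, x) = D_f(x,x)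
   = 0 (forward) or D_f(x, T_i x) = 0 (backward), whence T_i x = x. *)

Section SegmentGeometry.
Context {R : realType} {H : normedModType R}.

Lemma convex_comb_segment (u : R) (a b : H) :
  u *: a + (1 - u) *: b = b + u *: (a - b).
Proof. by rewrite scalerBl scale1r scalerBr addrCA addrA. Qed.

Lemma convex_comb_on_line (b d : H) (t u1 u2 : R) :
  t *: (b + u1 *: d) + (1 - t) *: (b + u2 *: d)
  = b + (t * u1 + (1 - t) * u2) *: d.
Proof.
rewrite !scalerDr !scalerA addrACA -!scalerDl.
by rewrite [t + _]addrC subrK scale1r.
Qed.

Definition segment (b d : H) (s : R) : set H :=
  [set x | exists2 u, 0 <= u <= s & x = b + u *: d].

Lemma segment_convex (b d : H) (s : R) : convex_subset (segment b d s).
Proof.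
move=> x y t [u1 /andP[u10 u1s] ->] [u2 /andP[u20 u2s] ->] /andP[t0 t1].
exists (t * u1 + (1 - t) * u2); last by rewrite convex_comb_on_line.
by apply/andP; split; nra.
Qed.

Lemma segment_in_interior {A : set H} {b : H} (d : H) :
  interior A b -> exists2 s : R, 0 < s < 1 & segment b d s `<=` interior A.
Proof.
move=> /nbhs_interior /nbhs_normP [e /= e0 He].
pose s := Num.min (1 / 2) (e / (2 * (`|d| + 1))).
have nd1 : 0 < `|d| + 1 by rewrite ltr_wpDl.
have s0 : 0 < s by rewrite lt_min !divr_gt0 // mulr_gt0.
have s1 : s < 1 by rewrite gt_min ltr_pdivrMr // mul1r ltr1n.
have sd : s * `|d| < e.
  have hs : s <= e / (2 * (`|d| + 1)) by rewrite ge_min lexx orbT.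
  have hx : e / (2 * (`|d| + 1)) * (`|d| + 1) = e / 2.
    by field; rewrite lt0r_neq0.
  have := ler_wpM2r (ltW nd1) hs; rewrite hx mulrDr mulr1; nra.
exists s; first by rewrite s0 s1.
move=> _ [u /andP[u0 us] ->]; apply: He => /=.
rewrite opprD addNKr normrN normrZ ger0_norm //.
by apply: le_lt_trans sd; rewrite ler_wpM2r.
Qed.

End SegmentGeometry.

Section InnerProduct.
Context {R : realType} {H : normedModType R} {ip : H -> H -> R}.
Hypothesis hip : is_inner_product ip.

Lemma ip0l (z : H) : ip 0 z = 0.
Proof. have [_ hl _] := hip; have := hl 1 0 0 z; rewrite scale1r addr0; lra. Qed.

Lemma ip0r (z : H) : ip z 0 = 0.
Proof. by have [hs _ _] := hip; rewrite hs ip0l. Qed.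

Lemma ipZr (z x : H) (u : R) : ip z (u *: x) = u * ip z x.
Proof.
have [hs hl _] := hip.
by rewrite hs -[u *: x]addr0 hl ip0l addr0 hs.
Qed.

End InnerProduct.

Section BregmanZero.
Context {R : realType} {H : normedModType R}.
Context {ip : H -> H -> R} {f : H -> \bar R} {gf : H -> H}.
Hypotheses (hip : is_inner_product ip) (hproper : proper_fun f)
  (hconvex : convex_efun f)
  (hgrad : forall x, interior (dom f) x -> gateaux_grad ip f x (gf x))
  (hesc : essentially_strictly_convex ip f).

Lemma fin_num_dom {x} : dom f x -> f x \is a fin_num.
Proof. by have [hm _] := hproper; rewrite fin_numE hm /= => /lt_eqF ->. Qed.

(* Otherwise the difference quotients at small t > 0 would
   exceed the slope f y - f p, contradicting convexity along [p, y]. *)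
Lemma gateaux_grad_subgrad {p g} : gateaux_grad ip f p g ->
  forall y, (f p + (ip g (y - p))%:E <= f y)%E.
Proof.
have [hm _] := hproper; move=> [fpfin hg] y.
move: (hm y); case efy: (f y) => [r| |] // _; last by rewrite leey.
rewrite -(fineK fpfin) -EFinD lee_fin leNgt; apply/negP => hK.
set h := y - p.
have slope : r - fine (f p) < ip g h by rewrite ltrBlDl.
have := cvgr_gt _ (hg h) _ slope; rewrite near_withinE.
move=> /(_ _) /nbhs_normP [e /= e0 He].
pose t := Num.min (e / 2) (1 / 2).
have t0 : 0 < t by rewrite lt_min !divr_gt0.
have t1 : t < 1 by rewrite gt_min orbC ltr_pdivrMr // mul1r ltr1n.
have te : `|0 - t| < e.
  rewrite sub0r normrN gtr0_norm // gt_min ltr_pdivrMr // ltr_pMr //.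
  by rewrite ltr1n.
have := He t te (lt0r_neq0 t0); apply/negP; rewrite -leNgt.
have := hconvex y p t; rewrite t0 t1 => /(_ isT).
rewrite convex_comb_segment -/h efy -(fineK fpfin) -!EFinM -EFinD.
move: (hm (p + t *: h)); case: (f (p + t *: h)) => [z| |] //= _.
by rewrite lee_fin ler_pdivrMr // mulrBl; lra.
Qed.

Lemma interior_dom_subdiff : interior (dom f) `<=` dom_subdiff ip f.
Proof.
move=> x xi; exists (gf x); have [fx _] := hgrad x xi.
by split => //; exact: gateaux_grad_subgrad (hgrad x xi).
Qed.

Lemma bregman_self x : interior (dom f) x -> bregman ip f gf x x = 0%E.
Proof.
move=> xi; have [fx _] := hgrad x xi.
rewrite /bregman; case: pselect => [/= _|//].
by rewrite subrr ip0r // -(fineK fx) -!EFinB !subrr.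
Qed.

(* If D_f(a,b) = 0 then f is affine on [b, a): below by the gradient
   inequality at b, above by convexity. *)
Lemma bregman_zero_affine {a b} : interior (dom f) b -> dom f a ->
  bregman ip f gf a b = 0%E ->
  forall u, 0 <= u < 1 ->
  f (b + u *: (a - b)) = (fine (f b) + u * (fine (f a) - fine (f b)))%:E.
Proof.
move=> bi ad; have fbfin := fin_num_dom (interior_subset bi).
have fafin := fin_num_dom ad.
rewrite /bregman; case: pselect => [/= _|//].
rewrite -(fineK fafin) -(fineK fbfin) -!EFinB => -[hG] u /andP[u0 u1].
have low := gateaux_grad_subgrad (hgrad b bi) (b + u *: (a - b)).
rewrite addrAC subrr add0r ipZr // -(fineK fbfin) in low.
have [->|un0] := eqVneq u 0; first by rewrite scale0r addr0 mul0r addr0 fineK.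
have := hconvex a b u; rewrite lt_neqAle eq_sym un0 u0 u1 /= => /(_ isT).
rewrite convex_comb_segment -(fineK fafin) -(fineK fbfin) -!EFinM -EFinD.
move: low; case: (f (b + u *: (a - b))) => [z| |] //=; rewrite !lee_fin.
by move=> l1 l2; congr (_%:E); nra.
Qed.

Lemma strictly_convex_not_affine {C : set H} {x y} {t al be : R} :
  strictly_convex_on f C -> C x -> C y -> x != y -> 0 < t < 1 ->
  f x = al%:E -> f y = be%:E ->
  f (t *: x + (1 - t) *: y) != (t * al + (1 - t) * be)%:E.
Proof.
move=> hsc cx cy nxy t01 fx fy; apply/eqP => fxy.
have := hsc x y t cx cy nxy t01.
by rewrite fxy fx fy -!EFinM -EFinD ltxx.
Qed.

Lemma bregman_eq0 {a b} : interior (dom f) b -> dom f a ->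
  bregman ip f gf a b = 0%E -> a = b.
Proof.
move=> bi ad hD; have [eab|nab] := eqVneq a b => //; exfalso.
have aff := bregman_zero_affine bi ad hD.
set d := a - b in aff; have d0 : d != 0 by rewrite subr_eq0.
have [s /andP[s0 s1] segi] := segment_in_interior d bi.
have hsc : strictly_convex_on f (segment b d s).
  apply: hesc.2; first exact: segment_convex.
  by move=> x /segi; exact: interior_dom_subdiff.
have ns : b + s *: d != b + 0 *: d.
  apply/eqP => /addrI /eqP; rewrite scale0r scaler_eq0 (negbTE d0) orbF.
  by rewrite (negbTE (lt0r_neq0 s0)).
have half : 0 < (1 / 2 : R) < 1 by apply/andP; split; lra.
have seg u : 0 <= u <= s -> segment b d s (b + u *: d) by exists u.
have in01 u : 0 <= u <= s -> 0 <= u < 1.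
  by move=> /andP[u0 us]; rewrite u0 (le_lt_trans us s1).
have s_in : 0 <= s <= s by apply/andP; split; lra.
have z_in : 0 <= (0 : R) <= s by apply/andP; split; lra.
have m_in : 0 <= 1 / 2 * s + (1 - 1 / 2) * 0 <= s by apply/andP; split; nra.
have := strictly_convex_not_affine hsc (seg _ s_in) (seg _ z_in) ns half
  (aff _ (in01 _ s_in)) (aff _ (in01 _ z_in)).
rewrite convex_comb_on_line (aff _ (in01 _ m_in)) => /eqP; apply.
by congr (_%:E); ring.
Qed.

End BregmanZero.

Section CircumcenterFixedPoints.
Context {R : realType} {H : normedModType R} {m : nat} (T : 'I_m -> H -> H).

Definition common_fix : set H := \bigcap_(i in [set: 'I_m]) Fix (T i).

Lemma Sset_self x : Sset T x x.
Proof. by left. Qed.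

Lemma Sset_image x i : Sset T x (T i x).
Proof. by right; exists i. Qed.

Lemma Sset_common_fix {x} : common_fix x -> Sset T x `<=` [set x].
Proof. by move=> xfix z [->|[i ->]] //; exact: xfix. Qed.

Lemma aff_mem (A : set H) x : A x -> aff A x.
Proof.
move=> Ax; exists 1%N, (fun _ => x), (fun _ => 1).
by rewrite !big_ord1 scale1r.
Qed.

Context {ip : H -> H -> R} {f : H -> \bar R} {gf : H -> H}.
Hypotheses (hip : is_inner_product ip) (hproper : proper_fun f)
  (hconvex : convex_efun f)
  (hgrad : forall x, interior (dom f) x -> gateaux_grad ip f x (gf x))
  (hesc : essentially_strictly_convex ip f).

(* x = CC->(x) iff x is a common fixed point in int dom f: otherwise some
   D_f(T_i x, x) = D_f(x, x) = 0 with T_i x <> x. *)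
Lemma fix_fwdCC : FixS (fwdCC ip f gf T) = interior (dom f) `&` common_fix.
Proof.
apply/seteqP; split => x.
- case=> hS _ xi heq; split => // i _.
  apply: (bregman_eq0 hip hproper hconvex hgrad hesc xi (hS _ (Sset_image x i))).
  by rewrite heq bregman_self.
- case=> xi xfix; split => //.
  + by move=> z /(Sset_common_fix xfix) ->; exact: interior_subset.
  + exact/aff_mem/Sset_self.
  + by move=> i; rewrite xfix.
Qed.

(* The backward version, via D_f(x, T_i x) = D_f(x, x) = 0. *)
Lemma fix_bwdCC : FixS (bwdCC ip f gf T) = interior (dom f) `&` common_fix.
Proof.
apply/seteqP; split => x.
- case=> hS _ xd heq; have xi := hS _ (Sset_self x); split => // i _.
  apply/esym.
  apply: (bregman_eq0 hip hproper hconvex hgrad hesc (hS _ (Sset_image x i)) xd).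
  by rewrite heq bregman_self.
- case=> xi xfix; split => //.
  + by move=> z /(Sset_common_fix xfix) ->.
  + exact/aff_mem/Sset_self.
  + exact: interior_subset.
  + by move=> i; rewrite xfix.
Qed.

End CircumcenterFixedPoints.

(* Lemma 4.6. *)
Theorem lemma4p6 (R : realType) (H : completeNormedModType R)
  (ip : H -> H -> R) (f : H -> \bar R) (gf : H -> H)
  (m : nat) (T : 'I_m -> H -> H) :
  is_inner_product ip ->
  proper_fun f -> lower_semicontinuous f -> convex_efun f ->
  interior (dom f) !=set0 ->
  (forall x, interior (dom f) x -> gateaux_grad ip f x (gf x)) ->
  essentially_strictly_convex ip f ->
  interior (dom f) `&` \bigcap_(i in [set: 'I_m]) Fix (T i) !=set0 ->
  FixS (fwdCC ip f gf T) = interior (dom f) `&` \bigcap_(i in [set: 'I_m]) Fix (T i)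
  /\ FixS (bwdCC ip f gf T) = interior (dom f) `&` \bigcap_(i in [set: 'I_m]) Fix (T i).
Proof.
move=> hip hproper _ hconvex _ hgrad hesc _.
by split; [exact: fix_fwdCC | exact: fix_bwdCC].
Qed.
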